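(* Let $I,J\subset S$ be Borel ideals such that $I_s\subseteq J_s$ for all $s\gg0$ and $p_{S/I}(z)=p_{S/J}(z)+a$ for some $a\in\mathbb N$. Then $I$ and $J$ have the same $x_1$-saturation, i.e. $I_{x_0x_1}=J_{x_0x_1}$.
   Context: $S=K[x_0,\dots,x_n]$, $K$ algebraically closed of characteristic $0$, standard grading, $x_0<x_1<\dots<x_n$. A monomial ideal is Borel if $x^\alpha\in J$, $\alpha_j>0$, $j<n$ imply $x^\alpha x_{j+1}/x_j\in J$. For a Borel ideal $J$, its $x_1$-saturation $J_{x_0x_1}$ is the ideal generated by the terms obtained by setting $x_0=x_1=1$ in the minimal monomial generators of $J$. $p_{S/I}(z)$ denotes the Hilbert polynomial of $S/I$. *)

(* Monomial ideals of S = K[x_0..x_n] encoded combinatorially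
   by their sets of monomials (exponent vectors). *)
From HB Require Import structures.
From mathcomp Require Import all_boot all_order all_algebra.
Set Implicit Arguments. Unset Strict Implicit. Unset Printing Implicit Defensive.
Import GRing.Theory.

Definition mon (n : nat) := 'I_n.+1 -> nat.

Definition mdeg n (m : mon n) : nat := \sum_(i < n.+1) m i.

Definition mdivides n (m m' : mon n) : Prop := forall i, m i <= m' i.

Definition is_monomial_ideal n (I : pred (mon n)) : Prop :=
  forall m m', I m -> mdivides m m' -> I m'.

Definition elem_move n (m : mon n) (j : 'I_n.+1) : mon n :=
  fun i => if i == j then (m i).-1
           else if val i == (val j).+1 then (m i).+1 else m i.

Definition is_Borel n (I : pred (mon n)) : Prop :=
  is_monomial_ideal I /\
  forall (m : mon n) (j : 'I_n.+1), I m -> 0 < m j -> val j < n -> I (elem_move m j).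

Definition min_gen n (I : pred (mon n)) (g : mon n) : Prop :=
  I g /\ forall m, I m -> mdivides m g -> forall i, m i = g i.

(* the x_1-saturation J_{x0x1}: ideal generated by the minimal generators
   with x_0 = x_1 = 1; a monomial lies in it iff it is divisible by some such term *)
Definition x1_saturation n (I : pred (mon n)) : mon n -> Prop :=
  fun m => exists g, min_gen I g /\ forall i : 'I_n.+1, 2 <= val i -> g i <= m i.

(* Hilbert function of S/I : number of degree-s monomials not in I *)
Definition hilbf n (I : pred (mon n)) (s : nat) : nat :=
  #|[pred f : {ffun 'I_n.+1 -> 'I_s.+1} |
      ((\sum_(i < n.+1) val (f i)) == s) && ~~ I (fun i => val (f i))]|.

Definition is_hilb_poly n (I : pred (mon n)) (p : {poly rat}) : Prop :=
  exists s0, forall s, s0 <= s -> ((hilbf I s)%:R : rat) = (p.[s%:R])%R.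

(* A monomial m lies in the saturation iff x_0^k0 x_1^k1 m' lies in the ideal for
   some k0, k1, where m' is m with x_0 and x_1 deleted.
   If x_0^k0 x_1^k1 m' lies in J but no x_0^l0 x_1^l1 m' lies in I, then
   in every large degree s the monomials x_0^(k0+k) x_1^(k1+t-k) m', k <= t, are
   t+1 monomials of J outside I; since I_s is contained in J_s this forces
   H_{S/I}(s) >= H_{S/J}(s) + t + 1 for t as large as we like, contradicting
   H_{S/I}(s) = H_{S/J}(s) + a.  With the saturation defined through the minimal
   generators, the Borel property only enters as the monomial-ideal property. *)
From mathcomp Require Import all_boot all_order all_algebra zify.
From Stdlib Require Import Classical FunctionalExtensionality.
Import GRing.Theory.
Set Implicit Arguments. Unset Strict Implicit.

Section MonomialIdeals.
Variable n : nat.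

Lemma mon_leq_mdeg (u : mon n) i : u i <= mdeg u.
Proof. by rewrite /mdeg (bigD1 i) //= leq_addr. Qed.

Lemma mdivides_mdeg_ltn (u v : mon n) i :
  mdivides u v -> u i < v i -> mdeg u < mdeg v.
Proof.
move=> uv lt_i; rewrite /mdeg (bigD1 i) //= [X in _ < X](bigD1 i) //=.
by rewrite -addSn (leq_add lt_i (leq_sum _ (fun j _ => uv j))).
Qed.

Lemma exists_min_gen (I : pred (mon n)) h :
  I h -> exists g, min_gen I g /\ mdivides g h.
Proof.
elim: {h}(mdeg h).+1 {-2}h (ltnSn (mdeg h)) => [//|N IH] h.
rewrite ltnS => deg_h Ih.
case: (classic (exists u, [/\ I u, mdivides u h & exists i, u i <> h i])).
- case=> u [Iu uh [i ne_i]].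
  have lt_u : mdeg u < N.
    apply: leq_trans deg_h; apply: (mdivides_mdeg_ltn uh (i := i)).
    by rewrite ltn_neqAle (uh i) andbT; apply/eqP.
  have [g [min_g gu]] := IH u lt_u Iu.
  by exists g; split=> // j; apply: leq_trans (gu j) (uh j).
- move=> no_u; exists h; split=> //; split=> // u Iu uh i.
  by apply: NNPP => ne_i; apply: no_u; exists u; split=> //; exists i.
Qed.

Definition ffun_of_mon s (u : mon n) : {ffun 'I_n.+1 -> 'I_s.+1} :=
  [ffun i => inord (u i)].

Lemma ffun_of_monK s (u : mon n) : mdeg u <= s -> (fun i => val (ffun_of_mon s u i)) = u.
Proof.
move=> deg_u; apply: functional_extensionality => i.
by rewrite ffunE /= inordK // ltnS (leq_trans (mon_leq_mdeg u i)).
Qed.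

Lemma hilbf_addn_leq (I J : pred (mon n)) s k (F : 'I_k -> mon n) :
  (forall u, mdeg u = s -> I u -> J u) -> injective F ->
  (forall i, mdeg (F i) = s) -> (forall i, J (F i)) -> (forall i, ~ I (F i)) ->
  hilbf J s + k <= hilbf I s.
Proof.
move=> IJ inj_F deg_F JF nIF.
pose phi i := ffun_of_mon s (F i).
have phiK i : (fun j => val (phi i j)) = F i by apply: ffun_of_monK; rewrite deg_F.
have inj_phi : injective phi.
  move=> i i' /(congr1 (fun f : {ffun 'I_n.+1 -> 'I_s.+1} => fun j => val (f j))).
  by rewrite !phiK => /inj_F.
rewrite /hilbf; set A := [pred f | _ && ~~ I _]; set B := [pred f | _ && ~~ J _].
have sub : [predU B & mem (codom phi)] \subset A.
  apply/subsetP => f; rewrite !inE => /orP[/andP[/eqP deg_f nJf] | /codomP[i fE]].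
    rewrite deg_f eqxx; apply: contra nJf => If.
    by apply: IJ If; rewrite /mdeg deg_f.
  subst f.
  by rewrite -/(mdeg _) phiK deg_F eqxx; apply/negP/nIF.
have disj : #|[predI B & mem (codom phi)]| = 0.
  apply: eq_card0 => f; rewrite !inE; apply/negP => /andP[/andP[_ nJf] /codomP[i fE]].
  by subst f; rewrite phiK JF in nJf.
have := cardUI B (mem (codom phi)); rewrite disj addn0 card_codom // card_ord => <-.
exact: subset_leq_card.
Qed.

Lemma hilbf_eventually_addn (I J : pred (mon n)) (pI pJ : {poly rat}) a :
  is_hilb_poly I pI -> is_hilb_poly J pJ -> pI = (pJ + (a%:R)%:P)%R ->
  exists s1, forall s, s1 <= s -> hilbf I s = hilbf J s + a.
Proof.
move=> [sI HI] [sJ HJ] pIE; exists (maxn sI sJ) => s; rewrite geq_max => /andP[sIs sJs].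
by apply/eqP; rewrite -(Num.Theory.eqr_nat rat) natrD HI // HJ // pIE hornerD hornerC.
Qed.

Variable hn : 1 <= n.

Definition ix0 : 'I_n.+1 := ord0.
Definition ix1 : 'I_n.+1 := Ordinal (hn : 1 < n.+1).

Definition set01 (m : mon n) k0 k1 : mon n :=
  fun i => if i == ix0 then k0 else if i == ix1 then k1 else m i.

Definition mdeg_tail (m : mon n) := \sum_(i < n.+1 | (i != ix0) && (i != ix1)) m i.

Lemma mdeg_set01 m k0 k1 : mdeg (set01 m k0 k1) = k0 + k1 + mdeg_tail m.
Proof.
rewrite /mdeg (bigD1 ix0) //= (bigD1 ix1) //= addnA /set01 eqxx /=; congr (_ + _).
by apply: eq_bigr => i /andP[/negbTE -> /negbTE ->].
Qed.

Lemma mdivides_set01 m k0 k1 l0 l1 :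
  k0 <= l0 -> k1 <= l1 -> mdivides (set01 m k0 k1) (set01 m l0 l1).
Proof. by move=> le0 le1 i; rewrite /set01; case: ifP => // _; case: ifP. Qed.

Lemma x1_saturationP (I : pred (mon n)) m : is_monomial_ideal I ->
  x1_saturation I m <-> exists k0 k1, I (set01 m k0 k1).
Proof.
move=> mI; split.
- move=> [g [[Ig _] g_tail]]; exists (g ix0), (g ix1); apply: mI Ig _ => i.
  rewrite /set01; case: (i =P ix0) => [-> // | /eqP ne0].
  case: (i =P ix1) => [-> // | /eqP ne1]; apply: g_tail.
  by move: ne0 ne1; rewrite -!(inj_eq val_inj) /=; case: (val i) => [|[|]].
- move=> [k0 [k1 /exists_min_gen [g [min_g g_div]]]]; exists g; split=> // i le2i.
  have := g_div i; rewrite /set01.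
  case: (i =P ix0) => [e|_]; first by rewrite e in le2i.
  by case: (i =P ix1) => [e|//]; rewrite e in le2i.
Qed.

Lemma hilbf_gap (I J : pred (mon n)) s0 m k0 k1 t :
  is_monomial_ideal J -> (forall u, s0 <= mdeg u -> I u -> J u) -> s0 <= t ->
  J (set01 m k0 k1) -> (forall l0 l1, ~ I (set01 m l0 l1)) ->
  hilbf J (k0 + k1 + t + mdeg_tail m) + t.+1 <= hilbf I (k0 + k1 + t + mdeg_tail m).
Proof.
move=> mJ IJ s0t Jm nIm; set s := k0 + k1 + t + _.
apply: (hilbf_addn_leq (F := fun k : 'I_t.+1 => set01 m (k0 + k) (k1 + (t - k)))).
- by move=> u deg_u; apply: IJ; rewrite deg_u /s; lia.
- move=> k k' /(congr1 (fun u => u ix0)); rewrite /set01 eqxx => /addnI.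
  exact: val_inj.
- by move=> k; rewrite mdeg_set01 /s; have := ltn_ord k; lia.
- by move=> k; apply: mJ Jm _; apply: mdivides_set01; apply: leq_addr.
- by move=> k; apply: nIm.
Qed.

End MonomialIdeals.

Theorem mainTheorem12 (n : nat) (hn : 1 <= n) (I J : pred (mon n)) :
  is_Borel I -> is_Borel J ->
  (exists s0, forall m : mon n, s0 <= mdeg m -> I m -> J m) ->
  forall (a : nat) (pI pJ : {poly rat}),
    is_hilb_poly I pI -> is_hilb_poly J pJ ->
    pI = (pJ + (a%:R)%:P)%R ->
  forall m : mon n, x1_saturation I m <-> x1_saturation J m.
Proof.
move=> [mI _] [mJ _] [s0 IJ] a pI pJ HI HJ Hp m.
have [s1 gap_a] := hilbf_eventually_addn HI HJ Hp.
split.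
- move=> /(x1_saturationP hn m mI) [k0 [k1 Im]]; apply/(x1_saturationP hn m mJ).
  exists (s0 + k0), k1; apply: IJ.
    by rewrite mdeg_set01 -!addnA leq_addr.
  by apply: mI Im _; apply: mdivides_set01; rewrite ?leq_addl.
- move=> /(x1_saturationP hn m mJ) [k0 [k1 Jm]]; apply/(x1_saturationP hn m mI).
  apply: NNPP => nIm.
  have nIm' l0 l1 : ~ I (set01 hn m l0 l1) by move=> Im; apply: nIm; exists l0, l1.
  have := hilbf_gap (t := s0 + (s1 + a)) mJ IJ (leq_addr _ _) Jm nIm'.
  by rewrite gap_a; lia.
Qed.
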